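(* Let $N\ge 2$ units $i=1,\dots,N$ be observed at times $t=-L,\dots,0,1$ with binary treatment $A_i$ applied at $t=1$, and suppose potential outcomes satisfy $$Y_{it}(0)-Y_{i,t-1}(0)=\delta_t+\epsilon_{it,0},\qquad Y_{it}(1)-Y_{it}(0)=\mathbb{I}(t=1)(\psi+\epsilon_{it,1}),$$ so that the unit effect is $\psi_i=Y_{i1}(1)-Y_{i1}(0)=\psi+\epsilon_{i1,1}$. Assume $Y_{it}=\mathbb{I}(t=1)A_iY_{it}(1)+(1-\mathbb{I}(t=1)A_i)Y_{it}(0)$, that $1\le\sum_iA_i\le N-1$, and that $|\epsilon_{it,a}|\le\zeta$ for all $i,t$ and $a\in\{0,1\}$. Define $\hat\psi_i^{DiD}=Y_{i1}-\hat Y_{i1}(0)$ if $A_i=1$, where $\hat Y_{i1}(0)=Y_{i0}+[\sum_j(1-A_j)]^{-1}\sum_j(1-A_j)(Y_{j1}-Y_{j0})$, and $\hat\psi_i^{DiD}=\hat Y_{i1}(1)-Y_{i1}$ if $A_i=0$, where $\hat Y_{i1}(1)=Y_{i0}+[\sum_jA_j]^{-1}\sum_jA_j(Y_{j1}-Y_{j0})$. Let $\tilde\tau_i=\{\tau\ge 0:\psi_i\in[\hat\psi_i^{DiD}-\tau,\hat\psi_i^{DiD}+\tau]\}$. Then for every treated unit $i$ ($A_i=1$), every $q_0\ge 2\zeta$ lies in $\tilde\tau_i$; and for every untreated unit $i$ ($A_i=0$), every $q_1\ge 4\zeta$ lies in $\tilde\tau_i$. *)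

From HB Require Import structures.
From mathcomp Require Import all_boot all_order all_algebra.
Set Implicit Arguments. Unset Strict Implicit. Unset Printing Implicit Defensive.
Import Order.TTheory GRing.Theory Num.Theory.
Local Open Scope ring_scope.

Section DiD.
Variables (R : realFieldType) (N : nat).

Definition ind (b : bool) : R := (b : nat)%:R.

Definition obsY (A : 'I_N -> bool) (Y0 Y1 : 'I_N -> int -> R) (i : 'I_N) (t : int) : R :=
  ind ((t == 1) && A i) * Y1 i t + (1 - ind ((t == 1) && A i)) * Y0 i t.

Definition Yhat0 (A : 'I_N -> bool) (Y : 'I_N -> int -> R) (i : 'I_N) : R :=
  Y i 0 + (\sum_j (1 - ind (A j)))^-1 * \sum_j (1 - ind (A j)) * (Y j 1 - Y j 0).

Definition Yhat1 (A : 'I_N -> bool) (Y : 'I_N -> int -> R) (i : 'I_N) : R :=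
  Y i 0 + (\sum_j ind (A j))^-1 * \sum_j ind (A j) * (Y j 1 - Y j 0).

Definition psi_DiD (A : 'I_N -> bool) (Y : 'I_N -> int -> R) (i : 'I_N) : R :=
  if A i then Y i 1 - Yhat0 A Y i else Yhat1 A Y i - Y i 1.

Definition tilde_tau (A : 'I_N -> bool) (Y : 'I_N -> int -> R) (psi_i : R) (i : 'I_N) : pred R :=
  fun tau => (0 <= tau) &&
    (psi_i \in `[psi_DiD A Y i - tau, psi_DiD A Y i + tau]).

End DiD.

(** For a control unit the observed first difference is [delta_1 + eps0_j], for a treated unit
    [delta_1 + psi + eps0_j + eps1_j].  Averaging over the opposite arm therefore cancels the
    common trend (and, for a control unit, the average effect [psi]), and [psi_i - psiDiD_i] is
    a unit's own error minus a weighted mean of errors: terms of size at most [zeta] for a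
    treated unit ([eps0] only), at most [2 zeta] for a control unit ([eps0 + eps1]). *)

From HB Require Import structures.
From mathcomp Require Import all_boot all_order all_algebra.
From mathcomp Require Import ring lra zify.
Set Implicit Arguments. Unset Strict Implicit. Unset Printing Implicit Defensive.
Import Order.TTheory GRing.Theory Num.Theory.
Local Open Scope ring_scope.

Section WeightedMean.
Variables (R : realFieldType) (n : nat).
Implicit Types (w x y : 'I_n -> R) (c z : R).

Definition wmean w x : R := (\sum_j w j)^-1 * \sum_j w j * x j.

Lemma eq_wmean_support w x y :
  (forall j, w j != 0 -> x j = y j) -> wmean w x = wmean w y.
Proof.
move=> eq_xy; congr (_ * _); apply: eq_bigr => j _.
by have [->|/eq_xy ->] := eqVneq (w j) 0; rewrite ?mul0r.
Qed.

Lemma wmean_addl w c x : \sum_j w j != 0 ->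
  wmean w (fun j => c + x j) = c + wmean w x.
Proof.
move=> sum_neq0; rewrite /wmean.
have -> : \sum_j w j * (c + x j) = c * \sum_j w j + \sum_j w j * x j.
  by rewrite mulr_sumr -big_split; apply: eq_bigr => j _; rewrite mulrDr mulrC.
by rewrite mulrDr mulrCA mulVf // mulr1.
Qed.

Lemma norm_wmean_le w x z : (forall j, 0 <= w j) -> 0 < \sum_j w j ->
  (forall j, `|x j| <= z) -> `|wmean w x| <= z.
Proof.
move=> w_ge0 sum_gt0 x_le; rewrite normrM ger0_norm ?invr_ge0 ?(ltW sum_gt0) //.
rewrite ler_pdivrMl // mulr_suml; apply: le_trans (ler_norm_sum _ _ _) _.
by apply: ler_sum => j _; rewrite normrM ger0_norm // ler_wpM2l.
Qed.

End WeightedMean.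

Lemma ind_le1 (R : realFieldType) b : ind R b <= 1.
Proof. by case: b; rewrite /ind ?ler01. Qed.

Lemma sum_ind (R : realFieldType) n (P : 'I_n -> bool) :
  \sum_j ind R (P j) = (\sum_j (P j : nat))%:R.
Proof. by rewrite natr_sum. Qed.

Lemma obsY_at1 (R : realFieldType) N A (Y0 Y1 : 'I_N -> int -> R) j :
  obsY A Y0 Y1 j 1 = if A j then Y1 j 1 else Y0 j 1.
Proof. by rewrite /obsY /ind eqxx /=; case: (A j); rewrite /= ?mulr1n ?mulr0n; ring. Qed.

Lemma obsY_at0 (R : realFieldType) N A (Y0 Y1 : 'I_N -> int -> R) j :
  obsY A Y0 Y1 j 0 = Y0 j 0.
Proof. by rewrite /obsY /ind /= mulr0n; ring. Qed.

Lemma mem_tilde_tau (R : realFieldType) N A (Y : 'I_N -> int -> R) x i tau :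
  `|x - psi_DiD A Y i| <= tau -> tau \in tilde_tau A Y x i.
Proof.
move=> dist_le; rewrite unfold_in /tilde_tau (le_trans _ dist_le) //=.
by rewrite in_itv /= -ler_distlC distrC.
Qed.

Section DiDError.
Variables (R : realFieldType) (N : nat) (A : 'I_N -> bool).
Hypothesis A_both_arms : (0 < \sum_(j < N) (A j : nat) < N)%N.
Variables (Y0 Y1 : 'I_N -> int -> R) (delta psi zeta : R) (eps0 eps1 : 'I_N -> R).
Hypothesis Y0_step : forall j, Y0 j 1 - Y0 j 0 = delta + eps0 j.
Hypothesis Y1_effect : forall j, Y1 j 1 - Y0 j 1 = psi + eps1 j.
Hypothesis eps0_le : forall j, `|eps0 j| <= zeta.
Hypothesis eps1_le : forall j, `|eps1 j| <= zeta.

Let Y := obsY A Y0 Y1.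
Let w1 j := ind R (A j).
Let w0 j := 1 - ind R (A j).

Lemma sum_w1_gt0 : 0 < \sum_j w1 j.
Proof. by rewrite sum_ind ltr0n; case/andP: A_both_arms. Qed.

Lemma sum_w0_gt0 : 0 < \sum_j w0 j.
Proof.
rewrite sumrB sumr_const card_ord sum_ind subr_gt0 ltr_nat.
by case/andP: A_both_arms.
Qed.

Lemma obsY_diff_control j : ~~ A j -> Y j 1 - Y j 0 = delta + eps0 j.
Proof. by move=> /negbTE Aj; rewrite /Y obsY_at1 obsY_at0 Aj. Qed.

Lemma obsY_diff_treated j : A j -> Y j 1 - Y j 0 = delta + psi + (eps0 j + eps1 j).
Proof.
move=> Aj; rewrite /Y obsY_at1 obsY_at0 Aj.
by have := Y0_step j; have := Y1_effect j; lra.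
Qed.

Lemma psi_DiD_treated i : A i ->
  (Y1 i 1 - Y0 i 1) - psi_DiD A Y i = wmean w0 eps0 - eps0 i.
Proof.
move=> Ai; rewrite /psi_DiD Ai /Yhat0 -/(wmean w0 _).
rewrite (@eq_wmean_support _ _ _ _ (fun j => delta + eps0 j)); last first.
  by move=> j; rewrite /w0; case: (A j) (@obsY_diff_control j) => [|-> //]; rewrite subrr eqxx.
rewrite wmean_addl ?gt_eqF ?sum_w0_gt0 // /Y obsY_at1 obsY_at0 Ai.
by have := Y0_step i; lra.
Qed.

Lemma psi_DiD_control i : ~~ A i ->
  (Y1 i 1 - Y0 i 1) - psi_DiD A Y i = (eps0 i + eps1 i) - wmean w1 (fun j => eps0 j + eps1 j).
Proof.
move=> /negbTE Ai; rewrite /psi_DiD Ai /Yhat1 -/(wmean w1 _).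
rewrite (@eq_wmean_support _ _ _ _ (fun j => delta + psi + (eps0 j + eps1 j))); last first.
  by move=> j; rewrite /w1; case: (A j) (@obsY_diff_treated j) => [-> //|]; rewrite eqxx.
rewrite wmean_addl ?gt_eqF ?sum_w1_gt0 // /Y obsY_at1 obsY_at0 Ai.
by have := Y0_step i; have := Y1_effect i; lra.
Qed.

Lemma psi_DiD_treated_err i : A i ->
  `|(Y1 i 1 - Y0 i 1) - psi_DiD A Y i| <= 2 * zeta.
Proof.
move=> Ai; rewrite psi_DiD_treated // mulr_natl mulr2n; apply: le_trans (ler_normB _ _) _.
rewrite lerD // norm_wmean_le ?sum_w0_gt0 // => j.
by rewrite /w0 subr_ge0 ind_le1.
Qed.

Lemma psi_DiD_control_err i : ~~ A i ->
  `|(Y1 i 1 - Y0 i 1) - psi_DiD A Y i| <= 4 * zeta.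
Proof.
have eps_le j : `|eps0 j + eps1 j| <= 2 * zeta.
  by rewrite mulr_natl mulr2n; apply: le_trans (ler_normD _ _) _; rewrite lerD.
move=> Ai; rewrite psi_DiD_control // (_ : 4 * zeta = 2 * zeta + 2 * zeta); last lra.
by apply: le_trans (ler_normB _ _) _; rewrite lerD // norm_wmean_le ?sum_w1_gt0.
Qed.

End DiDError.

Theorem proposition5 (R : realFieldType) (N L : nat) (hN : (2 <= N)%N)
  (A : 'I_N -> bool)
  (hA : (1 <= \sum_(i < N) (A i : nat) <= N - 1)%N)
  (Y0 Y1 : 'I_N -> int -> R) (delta : int -> R) (psi zeta : R)
  (eps0 eps1 : 'I_N -> int -> R)
  (h_untr : forall (i : 'I_N) (t : int), - (L%:Z) < t <= 1 ->
      Y0 i t - Y0 i (t - 1) = delta t + eps0 i t)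
  (h_eff : forall (i : 'I_N) (t : int), - (L%:Z) <= t <= 1 ->
      Y1 i t - Y0 i t = ind R (t == 1) * (psi + eps1 i t))
  (h_bnd0 : forall (i : 'I_N) (t : int), - (L%:Z) <= t <= 1 -> `|eps0 i t| <= zeta)
  (h_bnd1 : forall (i : 'I_N) (t : int), - (L%:Z) <= t <= 1 -> `|eps1 i t| <= zeta) :
  let Y := obsY A Y0 Y1 in
  let psi_unit := fun i : 'I_N => Y1 i 1 - Y0 i 1 in
  (forall i : 'I_N, A i -> forall q0 : R, 2 * zeta <= q0 ->
      q0 \in tilde_tau A Y (psi_unit i) i) /\
  (forall i : 'I_N, ~~ A i -> forall q1 : R, 4 * zeta <= q1 ->
      q1 \in tilde_tau A Y (psi_unit i) i).
Proof.
move=> Y psi_unit.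
have A_both_arms : (0 < \sum_(j < N) (A j : nat) < N)%N by case/andP: hA => *; lia.
have t1_range : - (L%:Z) <= 1%:Z <= 1%:Z by lia.
have t1_step_range : - (L%:Z) < 1%:Z <= 1%:Z by lia.
have Y0_step j : Y0 j 1 - Y0 j 0 = delta 1 + eps0 j 1 by rewrite -h_untr.
have Y1_effect j : Y1 j 1 - Y0 j 1 = psi + eps1 j 1.
  by rewrite h_eff // eqxx /ind mul1r.
have eps0_le j : `|eps0 j 1| <= zeta by exact: h_bnd0.
have eps1_le j : `|eps1 j 1| <= zeta by exact: h_bnd1.
split=> i Ai q q_ge; apply: mem_tilde_tau; apply: le_trans q_ge.
- exact: (psi_DiD_treated_err A_both_arms Y1 Y0_step eps0_le Ai).
- exact: (psi_DiD_control_err A_both_arms Y0_step Y1_effect eps0_le eps1_le Ai).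
Qed.
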